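(* Let $d \ge 1$ and $r \ge 1$ be integers, and let $X \subset \mathbb{R}^d$ be a finite set of points with $\left\lceil \frac{|X|}{2} \right\rceil \ge r$. Then there is a partition of $X$ into $r$ sets $X_1, \ldots, X_r$ and an affine hyperplane $L \subset \mathbb{R}^d$ such that $L \cap \operatorname{conv} X_j \neq \emptyset$ for every $j \in \{1,\ldots,r\}$.
   Context: $\operatorname{conv}$ denotes the convex hull. This is the case $k=d-1$ of the statement: for integers $0 \le k < d$ and finite $X \subset \mathbb{R}^d$ with $\lceil |X|(k+1)/(d+k+1)\rceil \ge r$, there is a partition of $X$ into $r$ sets and a $k$-dimensional affine subspace meeting the convex hull of each part; for $k=d-1$ the ratio $(k+1)/(d+k+1)$ equals $1/2$. *)

From HB Require Import structures.
From mathcomp Require Import all_boot all_order all_algebra.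
From mathcomp Require Import finmap.
From mathcomp Require Import reals.
Set Implicit Arguments. Unset Strict Implicit. Unset Printing Implicit Defensive.
Import Order.TTheory GRing.Theory Num.Theory.
Local Open Scope ring_scope.
Local Open Scope fset_scope.

Definition in_conv (R : realType) (d : nat) (A : {fset 'rV[R]_d}) (p : 'rV[R]_d) : Prop :=
  exists lam : 'rV[R]_d -> R,
    [/\ (forall x, x \in A -> 0 <= lam x),
        \sum_(x <- A) lam x = 1
      & p = \sum_(x <- A) lam x *: x].

Definition dotv (R : realType) (d : nat) (a p : 'rV[R]_d) : R :=
  \sum_(i < d) a ord0 i * p ord0 i.

Definition in_hyperplane (R : realType) (d : nat) (a : 'rV[R]_d) (b : R) (p : 'rV[R]_d) : Prop :=
  dotv a p = b.

Definition part (R : realType) (d r : nat) (X : {fset 'rV[R]_d})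
  (f : 'rV[R]_d -> 'I_r) (j : 'I_r) : {fset 'rV[R]_d} :=
  [fset x in X | f x == j].

From HB Require Import structures.
From mathcomp Require Import all_boot all_order all_algebra.
From mathcomp Require Import finmap.
From mathcomp Require Import reals.
From mathcomp Require Import ring lra zify.
Import Order.TTheory GRing.Theory Num.Theory.
Local Open Scope ring_scope.
Local Open Scope fset_scope.

(* Project X onto a coordinate axis and sort it: x_0 <= ... <= x_(n-1).
   Folding the sorted list in half, label x_i and x_(n-1-i) by i.  Since
   n >= 2r - 1, every label i < r is carried by a pair whose projections
   straddle the projection b of the median x_(r-1), so the segment joining
   the pair, which lies in the convex hull of part i, meets the hyperplane
   {x | x_0 = b}. *)

Definition fold_index {T : eqType} (s : seq T) (x : T) : nat :=
  minn (index x s) ((size s).-1 - index x s).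

Section FoldSorted.

Context {disp : Order.disp_t} {R : porderType disp} {T : eqType} (g : T -> R).

Lemma sorted_fold_straddle (s : seq T) (r : nat) :
  uniq s -> sorted (relpre g <=%O) s -> (0 < r)%N -> (2 * r <= (size s).+1)%N ->
  exists b : R, forall j, (j < r)%N -> exists p q,
    [/\ p \in s, q \in s, fold_index s p = j, fold_index s q = j
      & (g p <= b <= g q)%O].
Proof.
case: s => [|x0 s'] in_s sorted_s r_gt0 size_s; first by rewrite /= in size_s; lia.
set s := x0 :: s' in in_s sorted_s size_s *.
have mono := sorted_leq_nth (fun y x z => @le_trans _ _ (g y) (g x) (g z))
  (fun x => lexx (g x)) x0 sorted_s.
exists (g (nth x0 s r.-1)) => j lt_jr.
have lt_js : (j < size s)%N by lia.
have lt_ks : ((size s).-1 - j < size s)%N by rewrite /= in lt_js *; lia.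
exists (nth x0 s j), (nth x0 s ((size s).-1 - j)).
rewrite !mem_nth // /fold_index !index_uniq //; split; try lia.
by apply/andP; split; apply: mono; rewrite ?inE; lia.
Qed.

End FoldSorted.

Lemma fset_straddle_labelling {disp : Order.disp_t} {R : orderType disp}
    {T : choiceType} (g : T -> R) (X : {fset T}) (r : nat) :
  (0 < r)%N -> (2 * r <= #|` X|.+1)%N ->
  exists (f : T -> nat) (b : R), forall j, (j < r)%N -> exists p q,
    [/\ p \in X, q \in X, f p = j, f q = j & (g p <= b <= g q)%O].
Proof.
move=> r_gt0 card_X; set s := sort (relpre g <=%O) X.
have sorted_s : sorted (relpre g <=%O) s by apply: sort_sorted => x y; apply: le_total.
have uniq_s : uniq s by rewrite sort_uniq fset_uniq.
have [|b straddle] := sorted_fold_straddle g s r uniq_s sorted_s r_gt0.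
  by rewrite size_sort.
exists (fold_index s), b => j /straddle [p [q [ps qs fp fq pbq]]].
by exists p, q; split; rewrite // -(mem_sort (relpre g <=%O)).
Qed.

Lemma big_if_eq_seq {V : nmodType} {T : eqType} {s : seq T} {z : T} (F : T -> V) :
  uniq s -> z \in s -> \sum_(x <- s) (if x == z then F x else 0) = F z.
Proof.
move=> uniq_s zs; rewrite (bigD1_seq z) //= eqxx big1 ?addr0 // => x.
by move/negPf ->.
Qed.

Section Segments.

(* Reopened so that it takes precedence over fset_scope, where [+] is the
   union of finite maps. *)
Local Open Scope ring_scope.

Context {R : realType} {d : nat}.
Implicit Types (A : {fset 'rV[R]_d}) (a p q : 'rV[R]_d) (t : R).

Lemma in_conv_segment A p q t :
  p \in A -> q \in A -> 0 <= t <= 1 -> in_conv A (t *: p + (1 - t) *: q).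
Proof.
move=> pA qA /andP[t_ge0 t_le1]; have uA := fset_uniq A.
exists (fun x => (if x == p then t else 0) + (if x == q then 1 - t else 0)).
split.
- by move=> x _; apply: addr_ge0; case: ifP => _ //; rewrite subr_ge0.
- rewrite big_split /= (big_if_eq_seq (fun _ => t)) //.
  by rewrite (big_if_eq_seq (fun _ => 1 - t)) // addrC subrK.
- under eq_bigr => x _ do rewrite scalerDl !(fun_if (fun c => c *: x)) !scale0r.
  rewrite big_split /= (big_if_eq_seq (fun x => t *: x)) //.
  by rewrite (big_if_eq_seq (fun x => (1 - t) *: x)).
Qed.

Lemma dotvD_scale a p q t u :
  dotv a (t *: p + u *: q) = t * dotv a p + u * dotv a q.
Proof.
rewrite /dotv !mulr_sumr -big_split /=; apply: eq_bigr => i _.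
by rewrite !mxE; ring.
Qed.

Lemma level_in_segment (x y b : R) :
  x <= b <= y -> exists2 t, 0 <= t <= 1 & t * x + (1 - t) * y = b.
Proof.
move=> /andP[xb by_]; have [exy|nxy] := eqVneq x y.
  by exists 1; rewrite ?lexx ?ler01 //; lra.
have xy : 0 < y - x by rewrite subr_gt0 lt_neqAle nxy (le_trans xb by_).
exists ((y - b) / (y - x)); last by field; rewrite gt_eqF.
by rewrite divr_ge0 ?ler_pdivrMr ?mul1r /=; lra.
Qed.

Lemma segment_meets_hyperplane A a b p q :
  p \in A -> q \in A -> dotv a p <= b <= dotv a q ->
  exists z, in_conv A z /\ in_hyperplane a b z.
Proof.
move=> pA qA /level_in_segment[t t01 tb].
exists (t *: p + (1 - t) *: q); split; first exact: in_conv_segment.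
by rewrite /in_hyperplane dotvD_scale.
Qed.

End Segments.

Lemma delta_mx_neq0 (R : nzRingType) (m n : nat) (i : 'I_m) (j : 'I_n) :
  delta_mx i j != 0 :> 'M[R]_(m, n).
Proof.
apply/eqP => /matrixP /(_ i j); rewrite !mxE !eqxx /=.
by move/eqP; rewrite oner_eq0.
Qed.

Theorem mainTheorem1 (R : realType) (d r : nat) (X : {fset 'rV[R]_d}) :
  (1 <= d)%N -> (1 <= r)%N -> (r <= (#|` X| + 1) %/ 2)%N ->
  exists (f : 'rV[R]_d -> 'I_r) (a : 'rV[R]_d) (b : R),
    a != 0 /\
    forall j : 'I_r, exists p : 'rV[R]_d,
      in_conv (part X f j) p /\ in_hyperplane a b p.
Proof.
case: d X => [|d] X // _; case: r => [|r] // _ r_le.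
set a : 'rV[R]_d.+1 := delta_mx ord0 ord0.
have [|f [b straddle]] := fset_straddle_labelling (dotv a) X r.+1 (ltn0Sn r); first lia.
exists (fun x => inord (f x)), a, b; split; first exact: delta_mx_neq0.
move=> j; have [p [q [pX qX fp fq pbq]]] := straddle j (ltn_ord j).
have in_part x : x \in X -> f x = j -> x \in part X (fun x => inord (f x)) j.
  by move=> xX fx; rewrite !inE xX /= fx inord_val.
exact: segment_meets_hyperplane (in_part p pX fp) (in_part q qX fq) pbq.
Qed.
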